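(* Let $\mathfrak{C}=(U,M,I,N,J)$ be a formal decision context and $E\subseteq M$. Then $E$ is an I-consistent set of $\mathfrak{C}$ if and only if the following holds: for any $(Y,D)\in L(\mathfrak{C}_N)$ and $(O,C)\in L_O(\mathfrak{C}_M)$ with $O\subseteq Y$, there exists $(O',C')\in L_O(U,E,I_E)$ such that $O\subseteq O'\subseteq Y$.
   Context: Formal context $(U,M,I)$: $U$ and $M$ are finite nonempty sets and $I\subseteq U\times M$. For $O\subseteq U$ and $C\subseteq M$ define: - $O^{\uparrow}=\{a\in M\mid \forall x\in O\,((x,a)\in I)\}$ and $C^{\downarrow}=\{x\in U\mid \forall a\in C\,((x,a)\in I)\}$; - $O^{\square}=\{a\in M\mid \forall x\in U\,((x,a)\in I\Rightarrow x\in O)\}$ and $C^{\lozenge}=\{x\in U\mid \exists a\in C\,((x,a)\in I)\}$. A formal concept is a pair $(O,C)$ with $O^\uparrow=C$ and $C^\downarrow=O$ (set $L$). An object-oriented concept is a pair $(O,C)$ with $O^\square=C$ and $C^\lozenge=O$ (set $L_O$). Standing assumption: contexts are canonical, i.e. for all $x\in U$ and $a\in M$ we have $\{x\}^\uparrow\notin\{\emptyset,M\}$ and $\{a\}^\downarrow\notin\{\emptyset,U\}$. A formal decision context $\mathfrak{C}=(U,M,I,N,J)$ has conditional context $\mathfrak{C}_M=(U,M,I)$ and decision context $\mathfrak{C}_N=(U,N,J)$, with $M\cap N=\emptyset$. For $E\subseteq M$, put $I_E=I\cap(U\times E)$; the subcontext is $\mathfrak{C}(E)=(U,E,I_E,N,J)$,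 with conditional context $(U,E,I_E)$. An I-decision rule of a formal decision context is $(O,C)\rightarrow(Y,D)$ with $(O,C)$ an object-oriented concept of its conditional context, $(Y,D)\in L$ of its decision context, $O\subseteq Y$, $O\ne\emptyset$ and $Y\ne U$; the set of these is $\mathfrak{R}_I(\cdot)$. For $(O,C)\rightarrow(Y,D)\in\mathfrak{R}_I(\mathfrak{C}(E))$ and $(O_1,C_1)\rightarrow(Y_1,D_1)\in\mathfrak{R}_I(\mathfrak{C})$, the first implies the second iff $O_1\subseteq O\subseteq Y\subseteq Y_1$. $E$ is an I-consistent set of $\mathfrak{C}$ if every rule in $\mathfrak{R}_I(\mathfrak{C})$ is implied by some rule in $\mathfrak{R}_I(\mathfrak{C}(E))$. *)

From mathcomp Require Import all_boot.
Set Implicit Arguments. Unset Strict Implicit. Unset Printing Implicit Defensive.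

(* A formal context (U, A, I_A): objects = all of the finType U, attributes =
   the subset A of the finType M, incidence I : U -> M -> bool restricted to
   U x A.  The full context (U,M,I) is A = [set: M]; the subcontext
   (U,E,I_E) is A = E. *)

Definition up (U M : finType) (A : {set M}) (I : U -> M -> bool) (O : {set U})
  : {set M} := [set a in A | [forall x in O, I x a]].

Definition down (U M : finType) (I : U -> M -> bool) (C : {set M})
  : {set U} := [set x | [forall a in C, I x a]].

Definition box (U M : finType) (A : {set M}) (I : U -> M -> bool) (O : {set U})
  : {set M} := [set a in A | [forall x, I x a ==> (x \in O)]].

Definition dia (U M : finType) (I : U -> M -> bool) (C : {set M})
  : {set U} := [set x | [exists a in C, I x a]].

Definition is_concept (U M : finType) (A : {set M}) (I : U -> M -> bool)
  (O : {set U}) (C : {set M}) : Prop :=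
  C \subset A /\ up A I O = C /\ down I C = O.

Definition is_ooconcept (U M : finType) (A : {set M}) (I : U -> M -> bool)
  (O : {set U}) (C : {set M}) : Prop :=
  C \subset A /\ box A I O = C /\ dia I C = O.

Definition canonical (U M : finType) (I : U -> M -> bool) : Prop :=
  (forall x : U, up [set: M] I [set x] != set0 /\
                 up [set: M] I [set x] != [set: M]) /\
  (forall a : M, down I [set a] != set0 /\ down I [set a] != [set: U]).

Definition is_IRule (U M N : finType) (A : {set M}) (I : U -> M -> bool)
  (J : U -> N -> bool) (O : {set U}) (C : {set M}) (Y : {set U}) (D : {set N})
  : Prop :=
  is_ooconcept A I O C /\ is_concept [set: N] J Y D /\
  O \subset Y /\ O != set0 /\ Y != [set: U].

(* E is an I-consistent set of (U,M,I,N,J): every rule of R_I(C) is implied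
   by some rule (O,C)->(Y,D) of R_I(C(E)), i.e. O1 <= O <= Y <= Y1. *)
Definition I_consistent (U M N : finType) (I : U -> M -> bool)
  (J : U -> N -> bool) (E : {set M}) : Prop :=
  forall O1 C1 Y1 D1, is_IRule [set: M] I J O1 C1 Y1 D1 ->
  exists O C Y D, is_IRule E I J O C Y D /\
    O1 \subset O /\ O \subset Y /\ Y \subset Y1.

From mathcomp Require Import all_boot.

(* Both sides quantify over the same pairs (O,C) <= (Y,D), except that rules
   require O <> set0.  For O = set0 the right-hand side is met by (set0,set0),
   an object-oriented concept of every subcontext as soon as every attribute
   has a nonempty extent, which canonicity guarantees.  Conversely, the O'
   supplied by the right-hand side contains a nonempty O, so it is the
   antecedent of a rule of the subcontext implying the given one. *)

Lemma dia_set0 (U M : finType) (I : U -> M -> bool) : dia I set0 = set0.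
Proof. by apply/setP => x; rewrite !inE; apply/existsP => -[a]; rewrite inE. Qed.

Lemma box_set0 (U M : finType) (A : {set M}) (I : U -> M -> bool) :
  (forall a, down I [set a] != set0) -> box A I set0 = set0.
Proof.
move=> extent_neq0; apply/setP => a; rewrite !inE.
apply/negP => /andP [_ /forallP box_a].
have /set0Pn [x] := extent_neq0 a.
rewrite inE => /forall_inP /(_ a (set11 a)) Ixa.
by have := box_a x; rewrite Ixa inE.
Qed.

Lemma is_ooconcept_set0 (U M : finType) (A : {set M}) (I : U -> M -> bool) :
  (forall a, down I [set a] != set0) -> is_ooconcept A I set0 set0.
Proof. by move=> extent_neq0; rewrite /is_ooconcept sub0set box_set0 ?dia_set0. Qed.

Theorem theorem3p11 (U M N : finType) (I : U -> M -> bool) (J : U -> N -> bool)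
  (E : {set M})
  (hU : 0 < #|U|) (hM : 0 < #|M|) (hN : 0 < #|N|)
  (canM : canonical I) (canN : canonical J) :
  I_consistent I J E <->
  (forall (Y : {set U}) (D : {set N}) (O : {set U}) (C : {set M}),
     is_concept [set: N] J Y D -> Y != [set: U] ->
     is_ooconcept [set: M] I O C -> O \subset Y ->
     exists (O' : {set U}) (C' : {set M}),
       is_ooconcept E I O' C' /\ O \subset O' /\ O' \subset Y).
Proof.
split=> [consistent Y D O C YD Y_neqT OC sOY | between O C Y D].
- have [->|O_neq0] := eqVneq O set0.
    exists set0, set0; rewrite !sub0set; split=> //.
    by apply: is_ooconcept_set0 => a; case: (canM.2 a).
  have [O' [C' [Y' [D' [[OC' _] [sOO' [sO'Y' sY'Y]]]]]]] :=
    consistent O C Y D (conj OC (conj YD (conj sOY (conj O_neq0 Y_neqT)))).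
  by exists O', C'; split=> //; split=> //; apply: subset_trans sY'Y.
- move=> [OC [YD [sOY [O_neq0 Y_neqT]]]].
  have [O' [C' [OC' [sOO' sO'Y]]]] := between Y D O C YD Y_neqT OC sOY.
  have O'_neq0 : O' != set0.
    by apply: contraNneq O_neq0 => O'0; rewrite -subset0 -O'0.
  by exists O', C', Y, D; split; first split.
Qed.
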